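(* Let $\mathbf{F}$ be a field of characteristic $3$ and let $m,g\in\mathbf{N}_0$ with $B(m,g)\not\equiv0\pmod 3$. For every $u\in\mathbf{N}_0$, the element $(e_{m,g})_{\le u}$ is an idempotent in $S_\mathbf{F}((m+3^{u+1}-1,\,3^{u+1}-1))$.
   Context: For a partition $\lambda=(\lambda_1,\lambda_2)$ with $m=\lambda_1-\lambda_2$, $S_\mathbf{F}(\lambda)=\operatorname{End}_{\mathbf{F}S_r}(M^\lambda)$ ($M^\lambda$ the permutation module on cosets of $S_{\lambda_1}\times S_{\lambda_2}$) is a commutative $\mathbf{F}$-algebra with basis $b(0)=\mathbf{1},b(1),\dots,b(\lambda_2)$ and multiplication $b(i)b(j)=\sum_{h=\max\{i,j\}}^{i+j}\binom{h}{i}\binom{h}{j}\binom{m+i+j}{i+j-h}b(h)$, with the convention $b(a)=0$ for $a>\lambda_2$. $B(m,g)=\binom{m+2g}{g}$. With base-3 digits $(m+2g)_u$, $g_u$, define $I^{(0)}=\{u: g_u=0,(m+2g)_u=0\}$, $J^{(0)}=\{u:g_u=1,(m+2g)_u=2\}$, $I^{(1)}=\{u:g_u=0,(m+2g)_u=1\}$, $J^{(1)}=\{u:g_u=2,(m+2g)_u=2\}$, $I^{(2)}=\{u:g_u=0,(m+2g)_u=2\}$, $J^{(2)}=\{u:g_u=1,(m+2g)_u=1\}$. Define $(e_{m,g})_{\le t}$ as \[\prod_{u\in I^{(0)},u\le t}(\mathbf{1}+b(3^u)-b(2\cdot3^u))\prod_{u\in J^{(0)},u\le t}(b(2\cdot3^u)-b(3^u))\prod_{u\in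 I^{(1)},u\le t}(\mathbf{1}-b(2\cdot3^u))\prod_{u\in J^{(1)},u\le t}b(2\cdot3^u)\prod_{u\in I^{(2)},u\le t}(\mathbf{1}-b(3^u)+b(2\cdot3^u))\prod_{u\in J^{(2)},u\le t}(b(3^u)-b(2\cdot3^u)),\] and $(e_{m,g})_{<t}$ analogously with $u<t$ (so $(e_{m,g})_{<0}=\mathbf{1}$). *)

From HB Require Import structures.
From mathcomp Require Import all_boot all_order all_algebra.
Set Implicit Arguments. Unset Strict Implicit. Unset Printing Implicit Defensive.
Import GRing.Theory.
Local Open Scope ring_scope.

(* The algebra S_F(lambda), lambda = (lambda1, lambda2), m = lambda1 - lambda2,
   n = lambda2: elements are coefficient vectors w.r.t. the basis
   b(0), ..., b(n), i.e. finite functions 'I_n.+1 -> F. *)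

(* structure constant: b(i) b(j) = \sum_h Scoef m i j h * b(h),
   nonzero only for max(i,j) <= h <= i+j (binomials vanish for h < max(i,j)). *)
Definition Scoef (m i j h : nat) : nat :=
  if (h <= i + j)%N then ('C(h, i) * 'C(h, j) * 'C(m + i + j, i + j - h))%N
  else 0%N.

Definition Smul (F : fieldType) (m n : nat) (x y : {ffun 'I_n.+1 -> F})
  : {ffun 'I_n.+1 -> F} :=
  [ffun h : 'I_n.+1 =>
     \sum_(i < n.+1) \sum_(j < n.+1) x i * y j * (Scoef m i j h)%:R].

(* basis element b(a); b(a) = 0 for a > n (convention of the paper) *)
Definition Sb (F : fieldType) (n a : nat) : {ffun 'I_n.+1 -> F} :=
  [ffun h : 'I_n.+1 => if nat_of_ord h == a then 1 else 0].

Definition digit3 (u x : nat) : nat := ((x %/ 3 ^ u) %% 3)%N.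

Definition efactor (F : fieldType) (m g n u : nat) : {ffun 'I_n.+1 -> F} :=
  let a := digit3 u g in
  let c := digit3 u (m + 2 * g) in
  let b := Sb F n in
  if (a == 0)%N && (c == 0)%N then b 0%N + b (3 ^ u)%N - b (2 * 3 ^ u)%N
  else if (a == 1)%N && (c == 2)%N then b (2 * 3 ^ u)%N - b (3 ^ u)%N
  else if (a == 0)%N && (c == 1)%N then b 0%N - b (2 * 3 ^ u)%N
  else if (a == 2)%N && (c == 2)%N then b (2 * 3 ^ u)%N
  else if (a == 0)%N && (c == 2)%N then b 0%N - b (3 ^ u)%N + b (2 * 3 ^ u)%N
  else if (a == 1)%N && (c == 1)%N then b (3 ^ u)%N - b (2 * 3 ^ u)%N
  else b 0%N.

(* (e_{m,g})_{<= t} = 1 * f(0) * f(1) * ... * f(t), computed in S_F(lambda)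
   with lambda2 = n, lambda1 - lambda2 = m *)
Definition e_le (F : fieldType) (m g n t : nat) : {ffun 'I_n.+1 -> F} :=
  foldl (fun acc v => Smul m acc (efactor F m g n v)) (Sb F n 0%N) (iota 0 t.+1).

From HB Require Import structures.
From mathcomp Require Import all_boot all_order all_algebra.
From mathcomp Require Import zify ring.
Set Implicit Arguments. Unset Strict Implicit. Unset Printing Implicit Defensive.
Import GRing.Theory.
Local Open Scope ring_scope.

(* Put U = u + 1, so that the basis indices h < 3^U are U-digit base-3 numbers.
   A "digit product" is the element whose coefficient at b(h) is
   \prod_(t < U) c_(K t)(h_t), where h_t is the t-th base-3 digit of h and
   c_k : {0,1,2} -> F is one of seven coefficient vectors ("codes"): the six
   kinds of factors of e_{m,g} and the identity b(0).  Each factor of e_{m,g}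
   is a digit product which is the identity in all digits but one.

   The h-coordinate of a product x y is a double sum over i, j of
   C(h,i) C(h,j) C(m+i+j, i+j-h).  By Lucas' theorem modulo 3 this sum
   factorises over the digits, up to the carries of m + i + j and the borrows
   of i + j - h.  We generalise the sum to [twisted], which also records a
   pending carry or borrow, and prove a one-digit recursion ([twisted_step])
   with integer weights depending only on the lowest digits.  Two invariants
   then follow by induction on U, each inductive step reducing to a finite
   table of congruences modulo 3 checked by computation:
   - [twisted_compatible]: multiplying digit products that are the identity
     in complementary digits gives the expected digit product; hence
     (e_{m,g})_{<= u} is the digit product with the codes of e_{m,g};
   - [twisted_square]: if 3 does not divide B(m,g), that digit product is
     idempotent.  The digit condition propagates because B(m,g) factorises
     digitwise by Lucas' theorem. *)

Section Char3.
Variable F : fieldType.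
Hypothesis charF3 : 3%N \in [pchar F].

Lemma natr_mul3 x : ((3 * x)%N%:R : F) = 0.
Proof. by rewrite natrM (pcharf0 charF3) mul0r. Qed.

(* Pascal's rule three times: (1 + X)^(x+3) = (1 + X)^x (1 + 3X + 3X^2 + X^3). *)
Lemma binD3 x y : 'C(x + 3, y + 3) =
  ('C(x, y + 3) + 3 * 'C(x, y + 2) + 3 * 'C(x, y + 1) + 'C(x, y))%N.
Proof. rewrite !addn3 !addn2 !addn1 !binS; lia. Qed.

(* In characteristic 3 the middle coefficients vanish: (1 + X)^3 = 1 + X^3. *)
Lemma binD3_char x y :
  ('C(x + 3, y + 3))%:R = ('C(x, y + 3))%:R + ('C(x, y))%:R :> F.
Proof.
rewrite binD3.
have -> : ('C(x, y + 3) + 3 * 'C(x, y + 2) + 3 * 'C(x, y + 1) + 'C(x, y) =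
            'C(x, y + 3) + 'C(x, y) + 3 * ('C(x, y + 2) + 'C(x, y + 1)))%N by lia.
by rewrite natrD natr_mul3 addr0 natrD.
Qed.

Lemma binD3_low x k : (k < 3)%N -> ('C(x + 3, k))%:R = ('C(x, k))%:R :> F.
Proof.
case: k => [|[|[|//]]] _; first by rewrite !bin0.
  by rewrite !bin1 natrD (pcharf0 charF3) addr0.
have -> : 'C(x + 3, 2) = ('C(x, 2) + 3 * x.+1)%N by rewrite addn3 !binS !bin1 !bin0; lia.
by rewrite natrD natr_mul3 addr0.
Qed.

Lemma sum_nat_digits (R : nmodType) N (f : nat -> R) :
  \sum_(0 <= i < 3 * N) f i = \sum_(i0 < 3) \sum_(0 <= I < N) f (i0 + 3 * I)%N.
Proof.
rewrite mulnC big_nat_mul exchange_big /=; apply: eq_bigr => I _.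
rewrite -{1}[(I * 3)%N]add0n big_addn mulSn addnK big_mkord; apply: eq_bigr => i0 _.
by rewrite mulnC.
Qed.

Lemma lucas3 N0 k0 N K : (N0 < 3)%N -> (k0 < 3)%N ->
  ('C(N0 + 3 * N, k0 + 3 * K))%:R = ('C(N0, k0))%:R * ('C(N, K))%:R :> F.
Proof.
move=> hN0 hk0; elim: N K => [|N IH] K.
  case: K => [|K]; first by rewrite !muln0 !addn0 bin0 mulr1.
  by rewrite muln0 addn0 bin0n bin_small ?mulr0 //; lia.
have -> : (N0 + 3 * N.+1 = N0 + 3 * N + 3)%N by lia.
case: K => [|K].
  have := IH 0%N; rewrite !muln0 !addn0 !bin0 => <-.
  exact: binD3_low.
have -> : (k0 + 3 * K.+1 = k0 + 3 * K + 3)%N by lia.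
by rewrite binD3_char -addnA -mulnSr !IH binS natrD mulrDr.
Qed.

(* C(N, a - b), read as 0 when a < b; the multiplication rule of S_F(lambda)
   uses C(m + i + j, i + j - h) with this convention. *)
Definition binom_diff (N a b : nat) : nat := if (b <= a)%N then 'C(N, a - b) else 0%N.

(* A pending carry/borrow state e < 3 between two digit positions: state 1
   adds one to the minuend a of [binom_diff], state 2 adds one to b. *)
Definition carry_up (e : nat) : nat := (e == 1%N).
Definition borrow (e : nat) : nat := (e == 2%N).

(* For a digit-level difference w - z (w <= 5, z <= 3): the digit of the
   difference and the state passed on to the next digit. *)
Definition digit_sub (w z : nat) : nat * nat :=
  if (z <= w)%N then (if (w - z < 3)%N then (w - z, 0) else (w - z - 3, 1))%N
  else ((3 - (z - w))%N, 2%N).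

Lemma digit_sub_state w z : ((digit_sub w z).2 < 3)%N.
Proof. by rewrite /digit_sub; case: (z <= w)%N; [case: (w - z < 3)%N|]. Qed.

Lemma binom_diff_digits N0 N w z A B : (N0 < 3)%N -> (w <= 5)%N -> (z <= 3)%N ->
  ((binom_diff (N0 + 3 * N) (w + 3 * A) (z + 3 * B))%:R : F) =
  ('C(N0, (digit_sub w z).1))%:R *
  (binom_diff N (A + carry_up (digit_sub w z).2) (B + borrow (digit_sub w z).2))%:R.
Proof.
move=> hN0 hw hz.
have lucas d A' B' : (d < 3)%N -> (w + 3 * A - (z + 3 * B) = d + 3 * (A' - B'))%N ->
    ('C(N0 + 3 * N, w + 3 * A - (z + 3 * B)))%:R = ('C(N0, d))%:R * ('C(N, A' - B'))%:R :> F.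
  by move=> hd ->; rewrite lucas3.
rewrite /digit_sub /binom_diff.
case: (leqP z w) => hzw; first case: (ltnP (w - z) 3) => hd.
all: rewrite /carry_up /borrow /= ?addn0 ?addn1.
all: case: leqP => h1; case: leqP => h2; rewrite ?mulr0 //; try lia.
all: apply: lucas; lia.
Qed.

(* The coefficient vectors c_k at b(0), b(3^u), b(2*3^u) of the factors of
   e_{m,g} (codes 0..5); every other code is the identity b(0). *)
Definition code_coef (k d : nat) : int :=
  nth 0 (nth [:: 1; 0; 0]
    [:: [:: 1;  1; -1];
        [:: 0; -1;  1];
        [:: 1;  0; -1];
        [:: 0;  0;  1];
        [:: 1; -1;  1];
        [:: 0;  1; -1]]
    k) d.

Definition unit_code : nat := 6.

Definition code_of (a c : nat) : nat :=
  if (a == 0%N) && (c == 0%N) then 0%N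
  else if (a == 1%N) && (c == 2%N) then 1%N
  else if (a == 0%N) && (c == 1%N) then 2%N
  else if (a == 2%N) && (c == 2%N) then 3%N
  else if (a == 0%N) && (c == 2%N) then 4%N
  else if (a == 1%N) && (c == 1%N) then 5%N
  else unit_code.

Lemma code_of_lt a c : (code_of a c < 7)%N.
Proof. by rewrite /code_of; repeat case: ifP. Qed.

Definition ecode (m g t : nat) : nat := code_of (digit3 t g) (digit3 t (m + 2 * g)).

Definition shift (K : nat -> nat) : nat -> nat := fun t => K t.+1.

Fixpoint dprod (U : nat) (K : nat -> nat) (h : nat) : F :=
  if U is U'.+1 then (code_coef (K 0%N) (h %% 3))%:~R * dprod U' (shift K) (h %/ 3)
  else 1.

Lemma eq_dprod U K K' h : (forall t, (t < U)%N -> K t = K' t) ->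
  dprod U K h = dprod U K' h.
Proof.
elim: U K K' h => [//|U IH] K K' h eqK /=.
by rewrite eqK // (IH _ (shift K')) // => t ht; apply: eqK.
Qed.

Lemma eqn_digits h x : (h == x) = (h %% 3 == x %% 3)%N && (h %/ 3 == x %/ 3)%N.
Proof.
apply/eqP/andP => [-> //|[/eqP eq_mod /eqP eq_div]].
by rewrite (divn_eq h 3) (divn_eq x 3) eq_mod eq_div.
Qed.

Lemma code_unit d : (d < 3)%N -> (code_coef unit_code d)%:~R = (d == 0%N)%:R :> F.
Proof. by case: d => [|[|[|]]]. Qed.

Lemma dprod_unit U h : (h < 3 ^ U)%N ->
  dprod U (fun=> unit_code) h = (h == 0%N)%:R.
Proof.
elim: U h => [|U IH] h hh /=; first by move: hh; rewrite expn0 ltnS leqn0 => ->.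
rewrite code_unit ?ltn_mod // IH ?ltn_divLR // -?expnSr //.
by rewrite -natrM mulnb (eqn_digits h 0).
Qed.

Definition at_digit (k kap : nat) : nat -> nat :=
  fun t => if t == k then kap else unit_code.

Lemma sum_pick3 (c : nat -> F) x : (x < 3)%N ->
  \sum_(d < 3) c d * (x == d)%:R = c x.
Proof.
by rewrite !big_ord_recr big_ord0 /=; case: x => [|[|[|]]] //= _;
  rewrite ?mulr0 ?mulr1 ?add0r ?addr0.
Qed.

Lemma dprod_at_digit U k kap h : (k < U)%N -> (h < 3 ^ U)%N ->
  dprod U (at_digit k kap) h =
  \sum_(d < 3) (code_coef kap d)%:~R * (h == d * 3 ^ k)%N%:R.
Proof.
elim: U k h => [//|U IH] k h hk hh.
have hH : (h %/ 3 < 3 ^ U)%N by rewrite ltn_divLR // -expnSr.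
case: k hk => [|k] hk /=.
  rewrite (@eq_dprod U _ (fun=> unit_code)) // dprod_unit //.
  under eq_bigr => d _ do rewrite expn0 muln1 eqn_digits (modn_small (ltn_ord d)) (divn_small (ltn_ord d)).
  rewrite -(sum_pick3 (fun d => (code_coef kap d)%:~R * (h %/ 3 == 0)%N%:R)) ?ltn_mod //.
  by apply: eq_bigr => d _; rewrite -mulnb natrM; ring.
rewrite code_unit ?ltn_mod // IH //.
rewrite mulr_sumr; apply: eq_bigr => d _.
rewrite [in RHS]eqn_digits expnS mulnCA modnMr mulKn // -mulnb natrM; ring.
Qed.

Lemma dprod_digits U K i0 I : (i0 < 3)%N ->
  dprod U.+1 K (i0 + 3 * I) = (code_coef (K 0%N) i0)%:~R * dprod U (shift K) I.
Proof.
move=> hi0 /=; have -> : ((i0 + 3 * I) %% 3 = i0)%N by lia.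
by have -> : ((i0 + 3 * I) %/ 3 = I)%N by lia.
Qed.

(* The h-coordinate of the product of the digit products with codes K1, K2,
   generalised by a pending carry/borrow state e; e = 0 is the actual
   product (Lemma [Smul_dvec]). *)
Definition twisted U K1 K2 m e h : F :=
  \sum_(0 <= i < 3 ^ U) \sum_(0 <= j < 3 ^ U)
    dprod U K1 i * dprod U K2 j *
    ('C(h, i) * 'C(h, j) * binom_diff (m + i + j) (i + j + carry_up e) (h + borrow e))%:R.

Definition mcarry m0 q i0 j0 : nat := ((m0 + q + i0 + j0) %/ 3)%N.
Definition hstate h0 e i0 j0 : nat * nat := digit_sub (i0 + j0 + carry_up e) (h0 + borrow e).
Definition step_coef m0 q h0 e i0 j0 : nat :=
  ('C(h0, i0) * 'C(h0, j0) * 'C((m0 + q + i0 + j0) %% 3, (hstate h0 e i0 j0).1))%N.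

Lemma summand_digits m q e h i0 j0 I J :
  (q <= 2)%N -> (e < 3)%N -> (i0 < 3)%N -> (j0 < 3)%N ->
  let s := (hstate (h %% 3) e i0 j0).2 in
  (('C(h, i0 + 3 * I) * 'C(h, j0 + 3 * J) *
     binom_diff (m + q + (i0 + 3 * I) + (j0 + 3 * J))
       (i0 + 3 * I + (j0 + 3 * J) + carry_up e) (h + borrow e))%:R : F) =
  (step_coef (m %% 3) q (h %% 3) e i0 j0)%:R *
  ('C(h %/ 3, I) * 'C(h %/ 3, J) *
     binom_diff (m %/ 3 + mcarry (m %% 3) q i0 j0 + I + J)
       (I + J + carry_up s) (h %/ 3 + borrow s))%:R.
Proof.
move=> hq he hi0 hj0 s.
have hh : h = (h %% 3 + 3 * (h %/ 3))%N by lia.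
have up_le : (carry_up e <= 1)%N by rewrite /carry_up; case: (e == 1%N).
have borrow_le : (borrow e <= 1)%N by rewrite /borrow; case: (e == 2%N).
have -> : (m + q + (i0 + 3 * I) + (j0 + 3 * J) = (m %% 3 + q + i0 + j0) %% 3
    + 3 * (m %/ 3 + mcarry (m %% 3) q i0 j0 + I + J))%N by rewrite /mcarry; lia.
have -> : (i0 + 3 * I + (j0 + 3 * J) + carry_up e =
    (i0 + j0 + carry_up e) + 3 * (I + J))%N by lia.
have -> : (h + borrow e = (h %% 3 + borrow e) + 3 * (h %/ 3))%N by lia.
rewrite !natrM {1 2}hh !lucas3 ?ltn_mod // binom_diff_digits ?ltn_mod //; try lia.
rewrite /s /hstate; ring.
Qed.

Lemma twisted_expand U K1 K2 m q e h : (q <= 2)%N -> (e < 3)%N ->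
  twisted U.+1 K1 K2 (m + q) e h =
  \sum_(i0 < 3) \sum_(j0 < 3)
    ((code_coef (K1 0%N) i0)%:~R * (code_coef (K2 0%N) j0)%:~R *
     (step_coef (m %% 3) q (h %% 3) e i0 j0)%:R) *
    twisted U (shift K1) (shift K2) (m %/ 3 + mcarry (m %% 3) q i0 j0)
      (hstate (h %% 3) e i0 j0).2 (h %/ 3).
Proof.
move=> hq he; rewrite /twisted expnS sum_nat_digits; apply: eq_bigr => i0 _.
under eq_bigr => I _ do rewrite sum_nat_digits.
rewrite exchange_big; apply: eq_bigr => j0 _.
rewrite mulr_sumr; apply: eq_bigr => I _.
rewrite mulr_sumr; apply: eq_bigr => J _.
rewrite !dprod_digits // summand_digits //; ring.
Qed.

(* Collecting the terms with the same carry a and state b: the weight of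
   (a, b) is a sum over a fibre, written computably for the tables below. *)
Definition sum3 (g : nat -> int) : int := g 0%N + g 1%N + g 2%N.

Definition fibre_sum (f : nat -> nat -> int) (sa sb : nat -> nat -> nat) (a b : nat) : int :=
  sum3 (fun i0 => sum3 (fun j0 =>
    if (sa i0 j0 == a) && (sb i0 j0 == b) then f i0 j0 else 0)).

Lemma sum3E (g : nat -> int) : ((sum3 g)%:~R : F) = \sum_(i < 3) (g i)%:~R.
Proof. by rewrite !big_ord_recr big_ord0 /= add0r /sum3 !intrD. Qed.

Lemma sum_pick3x3 (Z : nat -> nat -> F) c x y : (x < 3)%N -> (y < 3)%N ->
  \sum_(a < 3) \sum_(b < 3) (if (x == a) && (y == b) then c else 0)%:~R * Z a b =
  c%:~R * Z x y.
Proof.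
move=> hx hy; rewrite -(sum_pick3 (fun a => c%:~R * Z a y) hx); apply: eq_bigr => a _.
rewrite -(sum_pick3 (fun b => c%:~R * Z a b) hy) mulr_suml; apply: eq_bigr => b _.
by case: (x == a); case: (y == b); rewrite /= ?mul0r ?mulr0 ?mulr1.
Qed.

Lemma regroup (f : nat -> nat -> int) (sa sb : nat -> nat -> nat) (Y : nat -> nat -> F) :
  (forall i j, (i < 3)%N -> (j < 3)%N -> (sa i j < 3)%N /\ (sb i j < 3)%N) ->
  \sum_(i < 3) \sum_(j < 3) (f i j)%:~R * Y (sa i j) (sb i j) =
  \sum_(a < 3) \sum_(b < 3) (fibre_sum f sa sb a b)%:~R * Y a b.
Proof.
move=> hs.
under [RHS]eq_bigr => a _ do under eq_bigr => b _ do rewrite sum3E mulr_suml.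
under [RHS]eq_bigr => a _ do under eq_bigr => b _ do
  under eq_bigr => i _ do rewrite sum3E mulr_suml.
under [RHS]eq_bigr => a _ do rewrite exchange_big.
rewrite [RHS]exchange_big; apply: eq_bigr => i _.
under [RHS]eq_bigr => a _ do rewrite exchange_big.
rewrite [RHS]exchange_big; apply: eq_bigr => j _.
by have [hai hbj] := hs i j (ltn_ord i) (ltn_ord j); rewrite sum_pick3x3.
Qed.

Definition step_weight k1 k2 m0 q h0 e : nat -> nat -> int :=
  fibre_sum (fun i0 j0 => code_coef k1 i0 * code_coef k2 j0 * (step_coef m0 q h0 e i0 j0)%:Z)
    (mcarry m0 q) (fun i0 j0 => (hstate h0 e i0 j0).2).

Lemma twisted_step U K1 K2 m q e h : (q <= 2)%N -> (e < 3)%N ->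
  twisted U.+1 K1 K2 (m + q) e h =
  \sum_(a < 3) \sum_(b < 3)
    (step_weight (K1 0%N) (K2 0%N) (m %% 3) q (h %% 3) e a b)%:~R *
    twisted U (shift K1) (shift K2) (m %/ 3 + a) b (h %/ 3).
Proof.
move=> hq he; rewrite twisted_expand // /step_weight.
rewrite -(@regroup _ (mcarry (m %% 3) q) (fun i0 j0 => (hstate (h %% 3) e i0 j0).2)
  (fun a b => twisted U (shift K1) (shift K2) (m %/ 3 + a) b (h %/ 3))); last first.
  move=> i j hi hj; split; last exact: digit_sub_state.
  by rewrite /mcarry; have := ltn_mod m 3; lia.
by apply: eq_bigr => i _; apply: eq_bigr => j _; rewrite !intrM.
Qed.

Lemma twisted_step0 U K1 K2 m e h : (e < 3)%N ->
  twisted U.+1 K1 K2 m e h =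
  \sum_(a < 3) \sum_(b < 3)
    (step_weight (K1 0%N) (K2 0%N) (m %% 3) 0 (h %% 3) e a b)%:~R *
    twisted U (shift K1) (shift K2) (m %/ 3 + a) b (h %/ 3).
Proof. by move=> he; rewrite -{1}[m]addn0 twisted_step. Qed.

Definition cong (x y : int) : bool := (3 %| x - y)%Z.

Lemma congF x y : cong x y -> x%:~R = y%:~R :> F.
Proof. by move=> hxy; apply/eqP; rewrite -subr_eq0 -intrB -(dvdz_pcharf charF3). Qed.

(* The weight condition under which the invariant of [twisted_compatible]
   passes from U to U + 1: the state-1 weights vanish and the state-0 weights
   add up to the expected coefficient c. *)
Definition closes_fold (V : nat -> nat -> int) (c : int) : bool :=
  [&& cong (V 0%N 1%N) 0, cong (V 1%N 1%N) 0, cong (V 2%N 1%N) 0 &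
      cong (V 0%N 0%N + V 1%N 0%N + V 2%N 0%N) c].

Lemma close_fold V c (Y : nat -> nat -> F) y : closes_fold V c ->
  (forall a, (a < 3)%N -> Y a 0%N = y) -> (forall a, (a < 3)%N -> Y a 2%N = 0) ->
  \sum_(a < 3) \sum_(b < 3) (V a b)%:~R * Y a b = c%:~R * y.
Proof.
move=> /and4P[c01 c11 c21 cs] Y0 Y2; rewrite !big_ord_recr !big_ord0 /= !add0r.
rewrite (congF c01) (congF c11) (congF c21) -(congF cs) !Y0 // !Y2 // !intrD; ring.
Qed.

(* The weight condition under which the invariant of [twisted_square] passes
   from U to U + 1, where g' is the carry of the lowest digits of m + 2g. *)
Definition closes_square (V : nat -> nat -> int) (g' : nat) (c : int) : bool :=
  if g' == 0%N then
    [&& cong (V 0%N 1%N) 0, cong (V 1%N 1%N) 0, cong (V 1%N 2%N) 0, cong (V 2%N 0%N) 0,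
        cong (V 2%N 1%N) 0, cong (V 2%N 2%N) 0, cong (V 0%N 2%N) (- V 1%N 0%N) &
        cong (V 0%N 0%N + V 1%N 0%N) c]
  else
    [&& cong (V 0%N 0%N) 0, cong (V 0%N 1%N) 0, cong (V 0%N 2%N) 0, cong (V 1%N 1%N) 0,
        cong (V 1%N 2%N) 0, cong (V 2%N 0%N) 0, cong (V 2%N 1%N) 0, cong (V 2%N 2%N) 0 &
        cong (V 1%N 0%N) c].

Lemma close_square V g' c (Y : nat -> nat -> F) y : closes_square V g' c -> (g' <= 1)%N ->
  Y g' 0%N = y -> (g' = 0%N -> Y 1%N 0%N - Y 0%N 2%N = y) ->
  \sum_(a < 3) \sum_(b < 3) (V a b)%:~R * Y a b = c%:~R * y.
Proof.
rewrite /closes_square !big_ord_recr !big_ord0 /= !add0r.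
case: g' => [|[|//]] /=.
  move=> /and4P[c01 c11 c12 /and4P[c20 c21 c22 /andP[c02 cs]]] _ Y0 /(_ erefl) Y1.
  rewrite (congF c01) (congF c11) (congF c12) (congF c20) (congF c21) (congF c22).
  rewrite (congF c02) -(congF cs) intrN intrD mulrDl -{1}Y0 -Y1; ring.
move=> /and4P[c00 c01 c02 /and4P[c11 c12 c20 /and3P[c21 c22 cs]]] _ Y1 _.
rewrite (congF c00) (congF c01) (congF c02) (congF c11) (congF c12) (congF c20).
rewrite (congF c21) (congF c22) -(congF cs) -Y1; ring.
Qed.

Definition all_lt (n : nat) (p : pred nat) : bool := all p (iota 0 n).

Lemma all_ltP n p : all_lt n p -> forall x, (x < n)%N -> p x.
Proof. by move=> /allP hp x hx; apply: hp; rewrite mem_iota. Qed.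

Definition fold_table : bool :=
  all_lt 7 (fun k1 => all_lt 7 (fun k2 => all_lt 7 (fun k3 =>
  all_lt 3 (fun m0 => all_lt 3 (fun h0 =>
    ((k1 == unit_code) && (k3 == k2)) || ((k2 == unit_code) && (k3 == k1)) ==>
    closes_fold (step_weight k1 k2 m0 0 h0 0) (code_coef k3 h0) &&
    closes_fold (step_weight k1 k2 m0 0 h0 2) 0))))).

Lemma fold_table_ok : fold_table.
Proof. by vm_compute. Qed.

Definition square_table : bool :=
  all_lt 3 (fun m0 => all_lt 3 (fun g0 => all_lt 3 (fun h0 =>
    let c0 := ((m0 + 2 * g0) %% 3)%N in
    let k := code_of g0 c0 in
    let g' := ((m0 + 2 * g0) %/ 3)%N in
    (g0 <= c0)%N ==>
    closes_square (step_weight k k m0 0 h0 0) g' (code_coef k h0) &&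
    closes_square (fun a b => step_weight k k m0 1 h0 0 a b - step_weight k k m0 0 h0 2 a b)
      g' (code_coef k h0)))).

Lemma square_table_ok : square_table.
Proof. by vm_compute. Qed.

Lemma twisted0 K1 K2 m e : twisted 0 K1 K2 m e 0 = (binom_diff m (carry_up e) (borrow e))%:R.
Proof. by rewrite /twisted expn0 !big_nat1 /= !mul1r bin0 !mul1n !addn0 add0n. Qed.

Lemma eq_twisted U K1 K1' K2 K2' m e h :
  (forall t, (t < U)%N -> K1 t = K1' t) -> (forall t, (t < U)%N -> K2 t = K2' t) ->
  twisted U K1 K2 m e h = twisted U K1' K2' m e h.
Proof.
move=> eq1 eq2; apply: eq_bigr => i _; apply: eq_bigr => j _.
by rewrite (eq_dprod i eq1) (eq_dprod j eq2).
Qed.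

Definition compatible (K1 K2 K3 : nat -> nat) : Prop := forall t,
  [/\ (K1 t < 7)%N, (K2 t < 7)%N &
      ((K1 t == unit_code) && (K3 t == K2 t)) || ((K2 t == unit_code) && (K3 t == K1 t))].

Lemma twisted_compatible U : forall K1 K2 K3, compatible K1 K2 K3 ->
  forall m h, (h < 3 ^ U)%N ->
  twisted U K1 K2 m 0 h = dprod U K3 h /\ twisted U K1 K2 m 2 h = 0.
Proof.
elim: U => [|U IH] K1 K2 K3 hc m h hh.
  by move: hh; rewrite expn0 ltnS leqn0 => /eqP ->; rewrite !twisted0 /binom_diff /= bin0.
have hH : (h %/ 3 < 3 ^ U)%N by rewrite ltn_divLR // -expnSr.
have [hk1 hk2 hk3] := hc 0%N.
have hk3' : (K3 0%N < 7)%N by case/orP: hk3 => /andP[_ /eqP ->].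
have IH' a := IH _ _ _ (fun t => hc t.+1) (m %/ 3 + a)%N _ hH.
have := all_ltP fold_table_ok hk1 => /all_ltP/(_ _ hk2)/all_ltP/(_ _ hk3').
move=> /all_ltP/(_ _ (ltn_mod m 3))/all_ltP/(_ _ (ltn_mod h 3))/implyP/(_ hk3)/andP[c0 c2].
pose Y a b := twisted U (shift K1) (shift K2) (m %/ 3 + a) b (h %/ 3).
have Y0 a : (a < 3)%N -> Y a 0%N = dprod U (shift K3) (h %/ 3) by move=> _; exact: (IH' a).1.
have Y2 a : (a < 3)%N -> Y a 2%N = 0 by move=> _; exact: (IH' a).2.
rewrite !twisted_step0 //; split; first exact: (close_fold (Y := Y) c0).
by rewrite (close_fold (Y := Y) c2 Y0 Y2) mul0r.
Qed.

Lemma sum_weightsB (V1 V2 : nat -> nat -> int) (Y : nat -> nat -> F) :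
  \sum_(a < 3) \sum_(b < 3) (V1 a b)%:~R * Y a b -
  \sum_(a < 3) \sum_(b < 3) (V2 a b)%:~R * Y a b =
  \sum_(a < 3) \sum_(b < 3) (V1 a b - V2 a b)%:~R * Y a b.
Proof.
rewrite -sumrB; apply: eq_bigr => a _.
by rewrite -sumrB; apply: eq_bigr => b _; rewrite intrB mulrBl.
Qed.

Definition lucas_valid (m g : nat) : bool := ('C(m + 2 * g, g) %% 3 != 0)%N.

Definition mg_carry (m g : nat) : nat := ((m %% 3 + 2 * (g %% 3)) %/ 3)%N.

(* By Lucas' theorem the hypothesis splits into a condition on the lowest
   digits and the same hypothesis for the higher digits of m + 2g and g. *)
Lemma lucas_valid_digits m g : lucas_valid m g ->
  (g %% 3 <= (m %% 3 + 2 * (g %% 3)) %% 3)%N /\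
  lucas_valid (m %/ 3 + mg_carry m g) (g %/ 3).
Proof.
move=> hv; have : ('C(m + 2 * g, g)%:R : F) != 0 by rewrite -(dvdn_pcharf charF3).
have -> : (m + 2 * g = (m %% 3 + 2 * (g %% 3)) %% 3 +
    3 * (m %/ 3 + mg_carry m g + 2 * (g %/ 3)))%N by rewrite /mg_carry; lia.
have Eg : g = (g %% 3 + 3 * (g %/ 3))%N by lia.
rewrite [X in 'C(_, X)]Eg lucas3 ?ltn_mod // mulf_eq0 negb_or => /andP[h1 h2].
split; last by move: h2; rewrite /lucas_valid -(dvdn_pcharf charF3).
by move: h1; apply: contraR; rewrite -ltnNge => /bin_small ->.
Qed.

Lemma digit3S t x : digit3 t.+1 x = digit3 t (x %/ 3).
Proof. by rewrite /digit3 expnS divnMA. Qed.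

(* The codes of the higher digits of (m, g) are those of (m', g / 3), where
   m' + 2 (g / 3) = (m + 2g) / 3. *)
Lemma ecode_shift m g t : shift (ecode m g) t = ecode (m %/ 3 + mg_carry m g) (g %/ 3) t.
Proof. by rewrite /shift /ecode !digit3S /mg_carry; congr (code_of _ (digit3 _ _)); lia. Qed.

Lemma ecode0 m g : ecode m g 0 = code_of (g %% 3) ((m %% 3 + 2 * (g %% 3)) %% 3).
Proof. by rewrite /ecode /digit3 expn0 !divn1; congr code_of; lia. Qed.

(* The idempotence invariant: the square of the digit product is itself,
   together with an auxiliary identity needed to absorb a carry from below. *)
Definition square_inv U K m h : Prop :=
  twisted U K K m 0 h = dprod U K h /\
  twisted U K K (m + 1) 0 h - twisted U K K m 2 h = dprod U K h.

Lemma twisted_square U : forall m g h, lucas_valid m g -> (h < 3 ^ U)%N ->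
  square_inv U (ecode m g) m h.
Proof.
elim: U => [|U IH] m g h hv hh.
  move: hh; rewrite expn0 ltnS leqn0 => /eqP ->.
  by rewrite /square_inv !twisted0 /binom_diff /= !bin0 subr0.
have [hd hv'] := lucas_valid_digits hv.
have hH : (h %/ 3 < 3 ^ U)%N by rewrite ltn_divLR // -expnSr.
set K := ecode m g; set g' := mg_carry m g; set K' := ecode (m %/ 3 + g') (g %/ 3).
have [IH0 IH1] : square_inv U K' (m %/ 3 + g') (h %/ 3) := IH _ _ _ hv' hH.
have hsh t : (t < U)%N -> shift K t = K' t by move=> _; exact: ecode_shift.
pose Y a b := twisted U (shift K) (shift K) (m %/ 3 + a) b (h %/ 3).
have eqY a b : Y a b = twisted U K' K' (m %/ 3 + a) b (h %/ 3) := eq_twisted _ _ _ hsh hsh.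
have eqD : dprod U (shift K) (h %/ 3) = dprod U K' (h %/ 3) := eq_dprod _ hsh.
have hg' : (g' <= 1)%N by move: hd; rewrite /g' /mg_carry; lia.
have Yg : Y g' 0%N = dprod U (shift K) (h %/ 3) by rewrite eqY eqD.
have Y1 : g' = 0%N -> Y 1%N 0%N - Y 0%N 2%N = dprod U (shift K) (h %/ 3).
  by move=> g0; move: IH1; rewrite !eqY eqD g0 !addn0.
have := all_ltP square_table_ok (ltn_mod m 3) => /all_ltP/(_ _ (ltn_mod g 3)).
move=> /all_ltP/(_ _ (ltn_mod h 3))/implyP/(_ hd)/andP[c1 c2].
have hk : K 0%N = code_of (g %% 3) ((m %% 3 + 2 * (g %% 3)) %% 3) := ecode0 m g.
rewrite /square_inv /= twisted_step // !twisted_step0 // hk.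
split; first exact: (close_square (Y := Y) c1 hg').
by apply: etrans (close_square (Y := Y) c2 hg' Yg Y1); exact: sum_weightsB.
Qed.

(* Digit products as elements of S_F(lambda), n + 1 = 3^U. *)
Definition dvec n U K : {ffun 'I_n.+1 -> F} := [ffun h => dprod U K (val h)].

Lemma eq_dvec n U K K' : (forall t, (t < U)%N -> K t = K' t) -> dvec n U K = dvec n U K'.
Proof. by move=> eqK; apply/ffunP => h; rewrite !ffunE (eq_dprod _ eqK). Qed.

Lemma Scoef_binom_diff m i j h :
  Scoef m i j h = ('C(h, i) * 'C(h, j) * binom_diff (m + i + j) (i + j + carry_up 0) (h + borrow 0))%N.
Proof. by rewrite /Scoef /binom_diff /= !addn0 -addnA; case: leqP; rewrite ?muln0. Qed.

Lemma Smul_dvec n U m K1 K2 : n.+1 = (3 ^ U)%N ->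
  Smul m (dvec n U K1) (dvec n U K2) = [ffun h : 'I_n.+1 => twisted U K1 K2 m 0 h].
Proof.
move=> hn; apply/ffunP => h; rewrite !ffunE /twisted -hn big_mkord.
apply: eq_bigr => i _; rewrite big_mkord; apply: eq_bigr => j _.
by rewrite !ffunE Scoef_binom_diff.
Qed.

Lemma Sb0_dvec n U : n.+1 = (3 ^ U)%N -> Sb F n 0 = dvec n U (fun=> unit_code).
Proof.
move=> hn; apply/ffunP => h; rewrite !ffunE dprod_unit; last by rewrite -hn ltn_ord.
by case: eqP.
Qed.

Lemma efactor_coef m g n k (h : 'I_n.+1) : efactor F m g n k h =
  \sum_(d < 3) (code_coef (ecode m g k) d)%:~R * (val h == d * 3 ^ k)%N%:R.
Proof.
have ifb (b : bool) : (if b then 1 else 0 : F) = b%:R by case: b.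
rewrite !big_ord_recr big_ord0 /= add0r mul0n mul1n /efactor /ecode /code_of.
by repeat case: ifP => _; rewrite !ffunE ?ifb /code_coef /=; ring.
Qed.

Lemma efactor_dvec m g n U k : n.+1 = (3 ^ U)%N -> (k < U)%N ->
  efactor F m g n k = dvec n U (at_digit k (ecode m g k)).
Proof.
move=> hn hk; apply/ffunP => h; rewrite efactor_coef ffunE dprod_at_digit //.
by rewrite -hn ltn_ord.
Qed.

Definition ecode_lt m g k : nat -> nat :=
  fun t => if (t < k)%N then ecode m g t else unit_code.

Lemma partial_dvec m g n U k : n.+1 = (3 ^ U)%N -> (k <= U)%N ->
  foldl (fun acc v => Smul m acc (efactor F m g n v)) (Sb F n 0) (iota 0 k) =
  dvec n U (ecode_lt m g k).
Proof.
move=> hn; elim: k => [|k IH] hk.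
  by rewrite /= (Sb0_dvec hn); apply: eq_dvec.
have -> : iota 0 k.+1 = iota 0 k ++ [:: k] by rewrite -addn1 iotaD.
rewrite foldl_cat IH ?(ltnW hk) //= (efactor_dvec _ _ hn hk) Smul_dvec //.
apply/ffunP => h; rewrite !ffunE.
have hh : (val h < 3 ^ U)%N by rewrite -hn ltn_ord.
have hc : compatible (ecode_lt m g k) (at_digit k (ecode m g k)) (ecode_lt m g k.+1).
  move=> t; rewrite /ecode_lt /at_digit.
  split; try by case: ifP => _; rewrite ?code_of_lt.
  by rewrite ltnS; case: (ltngtP t k) => [_|_|->]; rewrite !eqxx ?orbT.
by have [] := twisted_compatible hc m hh.
Qed.

Lemma square_dvec m g n U : lucas_valid m g -> n.+1 = (3 ^ U)%N ->
  Smul m (dvec n U (ecode m g)) (dvec n U (ecode m g)) = dvec n U (ecode m g).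
Proof.
move=> hv hn; rewrite Smul_dvec //; apply/ffunP => h; rewrite !ffunE.
have hh : (val h < 3 ^ U)%N by rewrite -hn ltn_ord.
by have [] := twisted_square hv hh.
Qed.

End Char3.

Unset Implicit Arguments.
Theorem proposition5p1 (F : fieldType) (charF3 : 3%N \in [pchar F])
  (m g : nat) (hB : ('C(m + 2 * g, g) %% 3 != 0)%N) (u : nat) :
  let n := (3 ^ u.+1).-1%N in
  Smul m (e_le F m g n u) (e_le F m g n u) = e_le F m g n u.
Proof.
move=> n; have hn : n.+1 = (3 ^ u.+1)%N by rewrite prednK // expn_gt0.
have e_leE : e_le F m g n u = dvec F n u.+1 (ecode m g).
  rewrite /e_le (partial_dvec charF3 _ _ hn (leqnn _)).
  by apply: eq_dvec => t ht; rewrite /ecode_lt ht.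
by rewrite e_leE (square_dvec charF3 hB hn).
Qed.
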